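(* Let $G_1=(V_1,E_1)$ be a graph of maximum degree $\Delta_1$ and let $G_2=(V_2,E_2)$ be a $\delta_2$-regular graph. Let $S_1\subseteq V_1$. For every integer $k\in\{\delta_2-\Delta_1,\dots,\Delta_1+\delta_2\}$, $S_1\times V_2$ is a $k$-daf set in $G_1\times G_2$ if and only if $S_1$ is a $(k-\delta_2)$-daf set in $G_1$.
   Context: All graphs are finite and simple (with non-empty vertex sets). For a graph $G=(V,E)$, a set $S\subseteq V$ and $v\in V$, let $\delta_S(v)=|\{u\in S: uv\in E\}|$ and $\overline{S}=V\setminus S$. For an integer $k$, a non-empty set $S\subseteq V$ is a defensive $k$-alliance if $\delta_S(v)\ge \delta_{\overline S}(v)+k$ for every $v\in S$. A set $X\subseteq V$ is a defensive $k$-alliance free set ($k$-daf set) if no defensive $k$-alliance $S$ satisfies $S\subseteq X$. The Cartesian product $G_1\times G_2$ of $G_1=(V_1,E_1)$, $G_2=(V_2,E_2)$ has vertex set $V_1\times V_2$, with $(a,b)$ adjacent to $(c,d)$ iff either $a=c$ and $bd\in E_2$, or $b=d$ and $ac\in E_1$. *)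

From HB Require Import structures.
From mathcomp Require Import all_boot all_order all_algebra.
Set Implicit Arguments. Unset Strict Implicit. Unset Printing Implicit Defensive.
Import Order.TTheory GRing.Theory Num.Theory.

Definition simple_graph (T : finType) (e : rel T) : Prop :=
  symmetric e /\ irreflexive e.

Definition deg_in (T : finType) (e : rel T) (S : {set T}) (v : T) : nat :=
  #|[set u in S | e v u]|.

Definition deg (T : finType) (e : rel T) (v : T) : nat := deg_in e setT v.

Definition max_deg (T : finType) (e : rel T) : nat := \max_(v : T) deg e v.

Definition regular (T : finType) (e : rel T) (d : nat) : Prop :=
  forall v : T, deg e v = d.

Definition def_alliance (T : finType) (e : rel T) (k : int) (S : {set T}) : Prop :=
  S != set0 /\
  forall v, v \in S -> ((deg_in e S v)%:Z >= (deg_in e (~: S) v)%:Z + k)%R.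

Definition kdaf (T : finType) (e : rel T) (k : int) (X : {set T}) : Prop :=
  forall S : {set T}, S \subset X -> ~ def_alliance e k S.

Definition cart_rel (T1 T2 : finType) (e1 : rel T1) (e2 : rel T2) : rel (T1 * T2) :=
  fun x y => ((x.1 == y.1) && e2 x.2 y.2) || ((x.2 == y.2) && e1 x.1 y.1).

(* The proof
   does not use the range hypothesis on k: the equivalence holds for all k.

   - The alliance inequality delta_S(v) >= delta_{~S}(v) + k is rewritten as
     deg v + k <= 2 delta_S(v) (def_allianceE), since the two partial
     degrees add up to deg v.
   - In G1 x G2 the neighbourhood of (a, b) splits into a "G1 part" and a
     "G2 part" (deg_in_cart).  For a cylinder A x V2 this gives
     delta_{A x V2}(a, b) = delta_A(a) + d2, hence deg (a, b) = deg a + d2;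
     for an arbitrary S it gives delta_S(a, b) <= delta_{pi(S)}(a) + d2,
     where pi(S) is the first projection of S.
   - Consequently a (k - d2)-alliance A of G1 lifts to the k-alliance A x V2
     (alliance_cylinder), and a k-alliance S of G1 x G2 projects to the
     (k - d2)-alliance pi(S) (alliance_proj).  Both directions of the
     theorem follow by contraposition, as the lift and the projection
     preserve containment in S1 x V2, resp. S1. *)
From mathcomp Require Import all_boot all_order all_algebra.
From mathcomp Require Import zify.
Set Implicit Arguments.
Unset Strict Implicit.
Import Order.TTheory GRing.Theory Num.Theory.

Lemma deg_in_split (T : finType) (e : rel T) (S : {set T}) (v : T) :
  deg_in e S v + deg_in e (~: S) v = deg e v.
Proof.
rewrite /deg /deg_in -(cardsID S [set u in [set: T] | e v u]).
by congr (_ + _); apply: eq_card => u; rewrite !inE andbC.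
Qed.

Lemma def_allianceE (T : finType) (e : rel T) (k : int) (S : {set T}) :
  def_alliance e k S <->
  S != set0 /\
  forall v, v \in S -> ((deg e v)%:Z + k <= 2 * (deg_in e S v)%:Z)%R.
Proof.
rewrite /def_alliance; split=> -[nzS allS]; split=> // v vS;
  have := allS v vS; have := @deg_in_split _ e S v; lia.
Qed.

Section CartesianDegrees.

Variables (T1 T2 : finType) (e1 : rel T1) (e2 : rel T2).
Hypothesis irr1 : irreflexive e1.

(* The neighbours of (a, b) in S are those reached along an edge of G1
   (second coordinate fixed) or of G2 (first coordinate fixed); the two
   kinds are disjoint because G1 has no loops. *)
Lemma deg_in_cart (S : {set T1 * T2}) (a : T1) (b : T2) :
  deg_in (cart_rel e1 e2) S (a, b) =
  #|[set a' | ((a', b) \in S) && e1 a a']|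
  + #|[set b' | ((a, b') \in S) && e2 b b']|.
Proof.
rewrite /deg_in.
set N1 := [set a' | ((a', b) \in S) && e1 a a'].
set N2 := [set b' | ((a, b') \in S) && e2 b b'].
have inj1 : injective (fun x : T1 => (x, b)) by move=> x y [].
have inj2 : injective (fun y : T2 => (a, y)) by move=> x y [].
have im1 u : (u \in (fun x => (x, b)) @: N1) = (u.2 == b) && (u.1 \in N1).
  by case: u => x y /=; apply/imsetP/andP =>
    [[z zN [-> ->]] | [/eqP -> xN]]; [rewrite eqxx | exists x].
have im2 u : (u \in (fun y => (a, y)) @: N2) = (u.1 == a) && (u.2 \in N2).
  by case: u => x y /=; apply/imsetP/andP =>
    [[z zN [-> ->]] | [/eqP -> yN]]; [rewrite eqxx | exists y].
have -> : [set u in S | cart_rel e1 e2 (a, b) u] =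
          ((fun x => (x, b)) @: N1) :|: ((fun y => (a, y)) @: N2).
  apply/setP => -[x y]; rewrite !inE im1 im2 !inE /cart_rel /=.
  by case: (eqVneq x a) => [->|_]; case: (eqVneq y b) => [->|_];
    rewrite ?irr1 ?eqxx /= ?andbF ?orbF.
rewrite cardsU !card_imset //.
suff -> : (fun x => (x, b)) @: N1 :&: (fun y => (a, y)) @: N2 = set0.
  by rewrite cards0 subn0.
apply/setP => -[x y]; rewrite !inE im1 im2 !inE /=.
by case: (eqVneq x a) => [->|]; rewrite ?irr1 ?andbF.
Qed.

Variable d2 : nat.
Hypothesis reg2 : regular e2 d2.

(* In a cylinder A x V2 every G2-neighbour is in the set. *)
Lemma deg_in_cylinder (A : {set T1}) (a : T1) (b : T2) :
  deg_in (cart_rel e1 e2) (setX A [set: T2]) (a, b) =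
  deg_in e1 A a + (a \in A) * d2.
Proof.
rewrite deg_in_cart -(reg2 b) /deg /deg_in; congr (_ + _).
  by apply: eq_card => x; rewrite !inE andbT.
case: (boolP (a \in A)) => aA; last first.
  by rewrite mul0n; apply/eqP; rewrite cards_eq0; apply/eqP/setP => y;
    rewrite !inE (negbTE aA).
by rewrite mul1n; apply: eq_card => y; rewrite !inE aA.
Qed.

Lemma deg_cart (a : T1) (b : T2) :
  deg (cart_rel e1 e2) (a, b) = deg e1 a + d2.
Proof.
rewrite /deg; have -> : [set: T1 * T2] = setX [set: T1] [set: T2].
  by apply/setP => u; rewrite !inE.
by rewrite deg_in_cylinder inE mul1n.
Qed.

Definition proj1_set (S : {set T1 * T2}) : {set T1} := fst @: S.

(* The G1-neighbours of (a, b) in S project into pi(S); there are at most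
   d2 G2-neighbours. *)
Lemma deg_in_cart_proj (S : {set T1 * T2}) (a : T1) (b : T2) :
  deg_in (cart_rel e1 e2) S (a, b) <= deg_in e1 (proj1_set S) a + d2.
Proof.
rewrite deg_in_cart -(reg2 b) /deg /deg_in; apply: leq_add.
  apply: subset_leq_card; apply/subsetP => x; rewrite !inE => /andP[xS ->].
  by rewrite andbT; apply/imsetP; exists (x, b).
by apply: subset_leq_card; apply/subsetP => y; rewrite !inE => /andP[_ ->].
Qed.

Lemma alliance_cylinder (k : int) (A : {set T1}) (b0 : T2) :
  def_alliance e1 (k - d2%:Z)%R A ->
  def_alliance (cart_rel e1 e2) k (setX A [set: T2]).
Proof.
move=> /def_allianceE [nzA allA]; apply/def_allianceE; split.
  case/set0Pn: nzA => a aA; apply/set0Pn; exists (a, b0); by rewrite !inE aA.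
move=> [a b]; rewrite !inE andbT /= => aA.
have := allA a aA; rewrite deg_cart deg_in_cylinder aA mul1n; lia.
Qed.

Lemma alliance_proj (k : int) (S : {set T1 * T2}) :
  def_alliance (cart_rel e1 e2) k S ->
  def_alliance e1 (k - d2%:Z)%R (proj1_set S).
Proof.
move=> /def_allianceE [nzS allS]; apply/def_allianceE; split.
  by rewrite /proj1_set imset_eq0.
move=> _ /imsetP [[a b] abS ->] /=.
have := allS _ abS; have := deg_in_cart_proj S a b; rewrite deg_cart; lia.
Qed.

End CartesianDegrees.

Theorem proposition2 (T1 T2 : finType) (e1 : rel T1) (e2 : rel T2)
  (x1 : T1) (x2 : T2)
  (G1 : simple_graph e1) (G2 : simple_graph e2)
  (d2 : nat) (reg2 : regular e2 d2) (S1 : {set T1}) (k : int) :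
  ((d2%:Z - (max_deg e1)%:Z <= k)%R /\ (k <= (max_deg e1)%:Z + d2%:Z)%R) ->
  (kdaf (cart_rel e1 e2) k (setX S1 [set: T2]) <-> kdaf e1 (k - d2%:Z)%R S1).
Proof.
move=> _; have irr1 := G1.2; split=> [freeX A AS1 allA | free1 S SX allS].
- exact: freeX _ (setXS AS1 (subxx _)) (alliance_cylinder irr1 reg2 x2 allA).
- have projS1 : proj1_set S \subset S1.
    apply/subsetP => _ /imsetP [u uS ->].
    by have := subsetP SX u uS; rewrite inE => /andP[].
  exact: free1 _ projS1 (alliance_proj irr1 reg2 allS).
Qed.
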